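(* Let $F$ be an infinite family of index sets linearly ordered by $\subseteq$ such that $I_1\subsetneq I_2$ in $F$ implies $I_2\setminus I_1$ is infinite, and let $(F^-,F^+)$ be a cut of $F$. For $G\subseteq F$ write $\mathcal{T}_G=\{T_I\mid I\in G\}$. Then $\mathrm{Cl}_E(\mathcal{T}_F)$ has the least generating set if and only if both $\mathrm{Cl}_E(\mathcal{T}_{F^-})$ and $\mathrm{Cl}_E(\mathcal{T}_{F^+})$ have least generating sets.
   Context: A predicate symbol $R$ is non-empty for a theory $T$ if $T\vdash\exists\bar x R(\bar x)$, empty otherwise. A complete theory $T$ in a predicate language is language uniform (LU) if for each arity $m$, every permutation of the set of $m$-ary symbols non-empty for $T$ preserves $T$. Let $T_0$ be a complete LU-theory in a relational language $\Sigma_0$, let $n\ge1$, and let $\{R_k\mid k\in I_0\}$, $I_0$ infinite, be the set of $n$-ary symbols of $\Sigma_0$ that are non-empty for $T_0$. Let $\Sigma'=\{R_k\mid k\in I_0\}\cup\{$symbols of $\Sigma_0$ of arity $\neq n\}$. An index set is an infinite $I\subseteq I_0$ with $|I|=|I_0|$ and $|I_0\setminus I|$ equal to the number of $n$-ary symbols of $\Sigma_0$ that are empty for $T_0$. For an index set $I$, $T_I$ is the complete $\Sigma'$-theory axiomatized by the restriction of $T_0$ to the language $\{R_k\mid k\in I\}\cup\{$symbols of arity $\ne n\}$ together with $\{\forall\bar x\neg R_l(\bar x)\mid l\in I_0\setminus I\}$. $E$-closure (over $\Sigma'$): let $E$ be a new binary symbol. The $E$-combination of a family $(\mathcal{A}_i)_i$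 of $\Sigma'$-structures with disjoint universes is the $(\Sigma'\cup\{E\})$-structure on $\bigcup_iA_i$ with $E$ the equivalence relation whose classes are the $A_i$ and each $R\in\Sigma'$ interpreted as $\bigcup_iR^{\mathcal{A}_i}$. For a set $\mathcal{T}$ of complete $\Sigma'$-theories, $\mathrm{Cl}_E(\mathcal{T})$ is the set of complete theories of the $E$-classes (as induced $\Sigma'$-structures) of structures elementarily equivalent to some $E$-combination of structures whose theories lie in $\mathcal{T}$. For an $E$-closed set $\mathcal{C}$, a subset $\mathcal{G}\subseteq\mathcal{C}$ is generating if $\mathrm{Cl}_E(\mathcal{G})=\mathcal{C}$; the least generating set is a generating set with no proper generating subset that is contained in every generating set. A cut of $F$ is a partition $(F^-,F^+)$ of $F$ into nonempty parts such that every element of $F^-$ is properly contained in every element of $F^+$. *)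

From Stdlib Require Import List Arith.
Import ListNotations.

Set Implicit Arguments.
Unset Strict Implicit.

(* An atom [Rel s f] stands for s(x_{f 0},...,x_{f (ar s - 1)})
   (only the first [ar s] values of [f] matter). *)
Inductive form (S : Type) : Type :=
| Rel : S -> (nat -> nat) -> form S
| Eqv : nat -> nat -> form S
| Neg : form S -> form S
| And : form S -> form S -> form S
| Ex  : nat -> form S -> form S.

Arguments Eqv {S}.

Fixpoint rename (S S' : Type) (g : S -> S') (p : form S) : form S' :=
  match p with
  | Rel s f => Rel (g s) f
  | Eqv x y => Eqv x y
  | Neg q => Neg (rename g q)
  | And q r => And (rename g q) (rename g r)
  | Ex x q => Ex x (rename g q)
  end.

Fixpoint free (S : Type) (ar : S -> nat) (p : form S) (v : nat) : Prop :=
  match p with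
  | Rel s f => exists i, i < ar s /\ f i = v
  | Eqv x y => v = x \/ v = y
  | Neg q => free ar q v
  | And q r => free ar q v \/ free ar r v
  | Ex x q => v <> x /\ free ar q v
  end.

Fixpoint uses (S : Type) (L : S -> Prop) (p : form S) : Prop :=
  match p with
  | Rel s _ => L s
  | Eqv _ _ => True
  | Neg q => uses L q
  | And q r => uses L q /\ uses L r
  | Ex _ q => uses L q
  end.

Definition Sent (S : Type) (ar : S -> nat) (L : S -> Prop) (p : form S) : Prop :=
  (forall v, ~ free ar p v) /\ uses L p.

Fixpoint iterEx (S : Type) (k : nat) (p : form S) : form S :=
  match k with
  | 0 => p
  | S k' => iterEx k' (Ex k' p)
  end.

Definition exR (S : Type) (ar : S -> nat) (s : S) : form S :=
  iterEx (ar s) (Rel s (fun i => i)).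

(* A (nonempty) structure: universe, a distinguished element witnessing
   non-emptiness, and interpretations of the relation symbols (an [ar s]-ary
   symbol is interpreted by its values on lists of length [ar s]). *)
Record structure (S : Type) : Type := Structure {
  dom : Type;
  pt : dom;
  rel : S -> list dom -> Prop }.

Arguments dom {S}.
Arguments pt {S}.
Arguments rel {S}.

Definition upd (D : Type) (env : nat -> D) (x : nat) (d : D) : nat -> D :=
  fun y => if Nat.eqb y x then d else env y.

Fixpoint sat (S : Type) (ar : S -> nat) (M : structure S)
    (env : nat -> dom M) (p : form S) : Prop :=
  match p with
  | Rel s f => rel M s (map (fun i => env (f i)) (seq 0 (ar s)))
  | Eqv x y => env x = env y
  | Neg q => ~ @sat S ar M env q
  | And q r => @sat S ar M env q /\ @sat S ar M env r
  | Ex x q => exists d, @sat S ar M (upd env x d) q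
  end.

Arguments sat {S} ar M env p.

Definition models (S : Type) (ar : S -> nat) (M : structure S) (p : form S) : Prop :=
  forall env, sat ar M env p.

Definition Th (S : Type) (ar : S -> nat) (L : S -> Prop) (M : structure S)
  : form S -> Prop :=
  fun p => Sent ar L p /\ models ar M p.

(* semantic consequence (equivalent to |- by completeness) *)
Definition entails (S : Type) (ar : S -> nat) (G : form S -> Prop) (p : form S) : Prop :=
  forall M : structure S, (forall q, G q -> models ar M q) -> models ar M p.

Definition complete_theory (S : Type) (ar : S -> nat) (L : S -> Prop)
    (T : form S -> Prop) : Prop :=
  (forall p, T p -> Sent ar L p) /\
  (exists M : structure S, forall p, T p -> models ar M p) /\
  (forall p, Sent ar L p -> entails ar T p -> T p) /\
  (forall p, Sent ar L p -> T p \/ T (Neg p)).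

Definition nonempty_for (S : Type) (ar : S -> nat) (T : form S -> Prop) (s : S) : Prop :=
  entails ar T (exR ar s).

Definition bijective (X Y : Type) (f : X -> Y) : Prop :=
  exists g : Y -> X, (forall x, g (f x) = x) /\ (forall y, f (g y) = y).

Definition LU (S : Type) (ar : S -> nat) (T : form S -> Prop) : Prop :=
  forall (m : nat) (sigma : S -> S),
    bijective sigma ->
    (forall s, ~ (ar s = m /\ nonempty_for ar T s) -> sigma s = s) ->
    (forall s, ar s = m /\ nonempty_for ar T s ->
               ar (sigma s) = m /\ nonempty_for ar T (sigma s)) ->
    forall p, T p -> T (rename sigma p).

Definition infinite (X : Type) (P : X -> Prop) : Prop :=
  ~ exists l : list X, forall x, P x -> In x l.

Definition equipotent (X Y : Type) (P : X -> Prop) (Q : Y -> Prop) : Prop :=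
  exists f : {x | P x} -> {y | Q y}, bijective f.

Section Setting.
Variables (S0 : Type) (ar0 : S0 -> nat) (T0 : form S0 -> Prop) (n : nat).

(* I_0: the n-ary symbols non-empty for T0 (we index R_k by k itself) *)
Definition I0 : S0 -> Prop := fun s => ar0 s = n /\ nonempty_for ar0 T0 s.

Definition Sigma' : S0 -> Prop := fun s => ar0 s <> n \/ I0 s.

Definition index_set (I : S0 -> Prop) : Prop :=
  (forall s, I s -> I0 s) /\ infinite I /\ equipotent I I0 /\
  equipotent (fun s => I0 s /\ ~ I s)
             (fun s => ar0 s = n /\ ~ nonempty_for ar0 T0 s).

Definition T_I (I : S0 -> Prop) : form S0 -> Prop :=
  fun p => Sent ar0 Sigma' p /\
    entails ar0 (fun q => (T0 q /\ uses (fun s => ar0 s <> n \/ I s) q) \/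
                          (exists l, I0 l /\ ~ I l /\ q = Neg (exR ar0 l))) p.

Definition T_G (G : (S0 -> Prop) -> Prop) : (form S0 -> Prop) -> Prop :=
  fun T => exists I, G I /\ T = T_I I.

End Setting.

Section Eclosure.
Variables (S : Type) (ar : S -> nat) (L : S -> Prop).

(* the language L u {E}, E = None binary *)
Definition arE : option S -> nat :=
  fun o => match o with None => 2 | Some s => ar s end.
Definition LE : option S -> Prop :=
  fun o => match o with None => True | Some s => L s end.

(* E-combination of a nonempty family (universes made disjoint via sigma) *)
Definition Ecomb (J : Type) (j0 : J) (A : J -> structure S) : structure (option S) :=
  {| dom := {j : J & dom (A j)};
     pt := existT _ j0 (pt (A j0));
     rel := fun o l => match o with
            | None => match l with
                      | [x; y] => projT1 x = projT1 y
                      | _ => False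
                      end
            | Some s => exists j (l' : list (dom (A j))),
                          l = map (existT _ j) l' /\ rel (A j) s l'
            end |}.

Definition elem_equiv (M N : structure (option S)) : Prop :=
  forall p, Sent arE LE p -> (models arE M p <-> models arE N p).

Definition Eclass (N : structure (option S)) (a : dom N) (h : rel N None [a; a])
  : structure S :=
  {| dom := {b : dom N | rel N None [a; b]};
     pt := exist _ a h;
     rel := fun s l => rel N (Some s) (map (@proj1_sig _ _) l) |}.

Definition ClE (TT : (form S -> Prop) -> Prop) : (form S -> Prop) -> Prop :=
  fun T => exists (J : Type) (j0 : J) (A : J -> structure S),
    (forall j, TT (Th ar L (A j))) /\
    exists N : structure (option S),
      elem_equiv N (Ecomb j0 A) /\
      exists (a : dom N) (h : rel N None [a; a]), T = Th ar L (Eclass h).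

Definition subset (X : Type) (A B : X -> Prop) : Prop := forall x, A x -> B x.

Definition generating (C G : (form S -> Prop) -> Prop) : Prop :=
  subset G C /\ ClE G = C.

Definition has_least_gen (C : (form S -> Prop) -> Prop) : Prop :=
  exists G, generating C G /\
    (forall G', generating C G' -> subset G G') /\
    (forall G', generating C G' -> subset G' G -> G' = G).

End Eclosure.

Definition set_incl (X : Type) (I J : X -> Prop) : Prop := forall x, I x -> J x.
Definition proper_incl (X : Type) (I J : X -> Prop) : Prop :=
  set_incl I J /\ ~ set_incl J I.

Definition infinite_family (X : Type) (F : (X -> Prop) -> Prop) : Prop :=
  ~ exists l : list (X -> Prop),
      forall I, F I -> exists J, In J l /\ forall x, I x <-> J x.

Definition linear_family (X : Type) (F : (X -> Prop) -> Prop) : Prop :=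
  forall I J, F I -> F J -> set_incl I J \/ set_incl J I.

Definition infinite_gaps (X : Type) (F : (X -> Prop) -> Prop) : Prop :=
  forall I J, F I -> F J -> proper_incl I J -> infinite (fun x => J x /\ ~ I x).

Definition is_cut (X : Type) (F Fm Fp : (X -> Prop) -> Prop) : Prop :=
  (forall I, F I <-> Fm I \/ Fp I) /\ (forall I, ~ (Fm I /\ Fp I)) /\
  (exists I, Fm I) /\ (exists I, Fp I) /\
  (forall I J, Fm I -> Fp J -> proper_incl I J).

(* Among complete Sigma'-theories that agree on the nullary symbols, E-closure is
   topological closure for the topology whose basic open sets are the [{T | p \in T}]:
   an E-class of a model of the theory of an E-combination satisfies a sentence only
   if some component does (relativize the sentence to the E-class), and conversely a
   theory all of whose sentences hold in members of the family is the theory of the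
   E-class of the diagonal element in an ultrapower of their E-combination (Los's
   theorem).  In this space a closed set has a least generating set iff its isolated
   points are dense, and that set then consists of the isolated points.

   Cl_E(T_F) is the union of the closed sets Cl_E(T_{F^-}) and Cl_E(T_{F^+}), and they
   meet in at most one point: since every I in F^- is contained in every I' in F^+,
   two theories in the meet say the same about each [exists x R_l(x)], and the models
   of the T_I differ only in which R_l they empty, so no sentence separates them.
   For two closed sets meeting in at most one point, the isolated points of the union
   are dense iff those of each part are. *)

From mathcomp Require filter.
From Stdlib Require Import List Arith Lia Classical FunctionalExtensionality
  PropExtensionality ClassicalEpsilon Eqdep.
Import ListNotations.

(* Requiring mathcomp's filter library turns bullets off globally. *)
Set Bullet Behavior "Strict Subproofs".
Set Implicit Arguments.
Unset Strict Implicit.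

Section Semantics.
Variables (S : Type) (ar : S -> nat).

Lemma upd_eq (D : Type) (e : nat -> D) x d : upd e x d x = d.
Proof. unfold upd. now rewrite Nat.eqb_refl. Qed.

Lemma upd_neq (D : Type) (e : nat -> D) x d v : v <> x -> upd e x d v = e v.
Proof. intros H. unfold upd. destruct (Nat.eqb_spec v x); congruence. Qed.

Lemma sat_ext_free (M : structure S) p : forall e1 e2 : nat -> dom M,
  (forall v, free ar p v -> e1 v = e2 v) -> (sat ar M e1 p <-> sat ar M e2 p).
Proof.
  induction p as [s f|x y|q IH|q IHq r IHr|x q IH]; intros e1 e2 He; simpl in *.
  - replace (map (fun i => e1 (f i)) (seq 0 (ar s)))
      with (map (fun i => e2 (f i)) (seq 0 (ar s))); [tauto|].
    apply map_ext_in. intros i Hi. apply in_seq in Hi.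
    symmetry. apply He. exists i. split; [lia|reflexivity].
  - now rewrite (He x (or_introl eq_refl)), (He y (or_intror eq_refl)).
  - now rewrite (IH e1 e2 He).
  - rewrite (IHq e1 e2 (fun v H => He v (or_introl H))),
      (IHr e1 e2 (fun v H => He v (or_intror H))). tauto.
  - split; intros [d Hd]; exists d; revert Hd; apply IH; intros v Hv;
      unfold upd; destruct (Nat.eqb_spec v x); auto; symmetry; auto.
Qed.

Lemma models_sentence (M : structure S) L p (e : nat -> dom M) :
  Sent ar L p -> (models ar M p <-> sat ar M e p).
Proof.
  intros [Hclosed _]. split; [intros H; apply H|].
  intros H e'. revert H. apply sat_ext_free. intros v Hv. now destruct (Hclosed v Hv).
Qed.

Lemma sent_neg L p : Sent ar L (Neg p) <-> Sent ar L p.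
Proof. unfold Sent; simpl; tauto. Qed.

Lemma sent_and L p q : Sent ar L (And p q) <-> Sent ar L p /\ Sent ar L q.
Proof. unfold Sent; simpl; firstorder. Qed.

Lemma models_neg (M : structure S) L p :
  Sent ar L p -> (models ar M (Neg p) <-> ~ models ar M p).
Proof.
  intros H. assert (H' : Sent ar L (Neg p)) by now apply sent_neg.
  now rewrite (models_sentence (fun _ => pt M) H'), (models_sentence (fun _ => pt M) H).
Qed.

Lemma models_and (M : structure S) p q :
  models ar M (And p q) <-> models ar M p /\ models ar M q.
Proof. unfold models; simpl; firstorder. Qed.

Lemma models_nullary (A : structure S) s : ar s = 0 ->
  (models ar A (Rel s (fun i => i)) <-> rel A s []).
Proof.
  intros H. unfold models. simpl. rewrite H. simpl.
  split; [intros H1; exact (H1 (fun _ => pt A))|intros H1 _; exact H1].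
Qed.

Definition verum : form S := Ex 0 (Eqv 0 0).

Lemma sent_verum L : Sent ar L verum.
Proof. split; simpl; auto. intros v [H1 [H2|H2]]; congruence. Qed.

Lemma models_verum (M : structure S) : models ar M verum.
Proof. intros e. now exists (pt M). Qed.

Fixpoint syms (p : form S) : list S :=
  match p with
  | Rel s _ => [s]
  | Eqv _ _ => []
  | Neg q => syms q
  | And q r => syms q ++ syms r
  | Ex _ q => syms q
  end.

Lemma uses_syms P p : uses P p -> forall s, In s (syms p) -> P s.
Proof.
  induction p as [s f|x y|q IH|q IHq r IHr|x q IH]; simpl; intros H s0 Hs.
  - now destruct Hs as [<-|[]].
  - destruct Hs.
  - eauto.
  - apply in_app_or in Hs. destruct H, Hs; eauto.
  - eauto.
Qed.

Lemma uses_all p : uses (fun _ : S => True) p.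
Proof. induction p; simpl; auto. Qed.

Lemma sat_agree_syms (D : Type) (d : D) (r1 r2 : S -> list D -> Prop) p :
  (forall s, In s (syms p) -> forall l, r1 s l <-> r2 s l) ->
  forall e, sat ar (Structure d r1) e p <-> sat ar (Structure d r2) e p.
Proof.
  induction p; simpl; intros H e.
  - apply H. now left.
  - tauto.
  - rewrite IHp; auto. tauto.
  - rewrite IHp1, IHp2; [tauto| |]; intros; apply H; apply in_or_app; auto.
  - split; intros [x Hx]; exists x; revert Hx; apply IHp; auto.
Qed.

Lemma syms_iterEx k : forall p : form S, syms (iterEx k p) = syms p.
Proof. induction k; simpl; intros p; auto. now rewrite IHk. Qed.

Lemma sat_iterEx (M : structure S) k :
  forall p e, sat ar M e (iterEx k p) -> exists e', sat ar M e' p.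
Proof.
  induction k; simpl; intros p e H; eauto.
  destruct (IHk _ _ H) as [e' [d Hd]]. eauto.
Qed.

Lemma sat_iterEx_intro (M : structure S) k : forall p e (g : nat -> dom M),
  sat ar M (fun v => if v <? k then g v else e v) p -> sat ar M e (iterEx k p).
Proof.
  induction k; simpl; intros p e g H.
  - revert H. apply sat_ext_free. reflexivity.
  - apply (IHk _ e g). simpl. exists (g k). revert H. apply sat_ext_free. intros v _.
    unfold upd. destruct (Nat.eqb_spec v k).
    + subst. now rewrite (proj2 (Nat.ltb_lt k (Datatypes.S k))) by lia.
    + destruct (Nat.ltb_spec v k), (Nat.ltb_spec v (Datatypes.S k)); auto; lia.
Qed.

Lemma sat_exR (M : structure S) e s : sat ar M e (exR ar s) -> exists l, rel M s l.
Proof.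
  unfold exR. intros H. destruct (sat_iterEx H) as [e' H']. simpl in H'. eauto.
Qed.

Lemma sat_exR_intro (M : structure S) e s (g : nat -> dom M) :
  rel M s (map g (seq 0 (ar s))) -> sat ar M e (exR ar s).
Proof.
  intros H. unfold exR. apply (@sat_iterEx_intro M (ar s) _ e g). simpl.
  erewrite map_ext_in; [exact H|]. intros i Hi. apply in_seq in Hi.
  destruct (Nat.ltb_spec i (ar s)); auto; lia.
Qed.

Lemma free_iterEx k : forall p v, free ar (iterEx k p) v -> free ar p v /\ k <= v.
Proof.
  induction k; simpl; intros p v H.
  - split; auto; lia.
  - destruct (IHk _ _ H) as [[H1 H2] H3]. split; auto. lia.
Qed.

Lemma sent_exR (L : S -> Prop) s : L s -> Sent ar L (exR ar s).
Proof.
  intros Hs. split.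
  - intros v Hv. apply free_iterEx in Hv. destruct Hv as [[i [Hi Hv]] Hk]. lia.
  - assert (Hk : forall k p, uses L p -> uses L (iterEx k p)) by (induction k; simpl; auto).
    now apply Hk.
Qed.

End Semantics.

(** * Relativization to an E-class *)

Section Relativization.
Variables (S : Type) (ar : S -> nat).

Fixpoint bound_var (p : form S) (v : nat) : Prop :=
  match p with
  | Neg q => bound_var q v
  | And q r => bound_var q v \/ bound_var r v
  | Ex x q => v = x \/ bound_var q v
  | _ => False
  end.

Fixpoint max_bound (p : form S) : nat :=
  match p with
  | Neg q => max_bound q
  | And q r => Nat.max (max_bound q) (max_bound r)
  | Ex x q => Nat.max x (max_bound q)
  | _ => 0
  end.

Definition fresh (p : form S) : nat := Datatypes.S (max_bound p).

Lemma fresh_not_bound p : ~ bound_var p (fresh p).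
Proof.
  assert (Hle : forall v, bound_var p v -> v <= max_bound p).
  { induction p; simpl; intros v H; try tauto; auto.
    - destruct H as [H|H]; [apply IHp1 in H|apply IHp2 in H]; lia.
    - destruct H as [->|H]; [|apply IHp in H]; lia. }
  intros H. apply Hle in H. unfold fresh in H. lia.
Qed.

(* Bounds each quantifier [Ex x] by the atom [E(x_c, x)]. *)
Fixpoint relativize (c : nat) (p : form S) : form (option S) :=
  match p with
  | Rel s f => Rel (Some s) f
  | Eqv x y => Eqv x y
  | Neg q => Neg (relativize c q)
  | And q r => And (relativize c q) (relativize c r)
  | Ex x q => Ex x (And (Rel None (fun i => if i =? 0 then c else x)) (relativize c q))
  end.

Lemma uses_relativize (L : S -> Prop) c p : uses L p -> uses (LE L) (relativize c p).
Proof. induction p; simpl; tauto. Qed.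

Lemma free_relativize c p v : free (arE ar) (relativize c p) v -> v = c \/ free ar p v.
Proof.
  induction p as [s f|x y|q IH|q IHq r IHr|x q IH]; simpl; intros H; auto.
  - destruct H as [H|H]; [destruct (IHq H)|destruct (IHr H)]; auto.
  - destruct H as [Hx [[i [Hi Hv]]|H]].
    + destruct i as [|[|i]]; simpl in Hv; auto; [congruence|lia].
    + destruct (IH H); auto.
Qed.

Definition relativized_sentence (p : form S) : form (option S) :=
  Ex (fresh p) (relativize (fresh p) p).

Lemma sent_relativized (L : S -> Prop) p :
  Sent ar L p -> Sent (arE ar) (LE L) (relativized_sentence p).
Proof.
  intros [Hclosed Hu]. split; simpl.
  - intros v [Hv H]. destruct (free_relativize H); [congruence|exact (Hclosed v H0)].
  - now apply uses_relativize.
Qed.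

Lemma sig_eq (A : Type) (P : A -> Prop) (u w : {x | P x}) :
  proj1_sig u = proj1_sig w -> u = w.
Proof. destruct u, w; simpl; intros ->. f_equal. apply proof_irrelevance. Qed.

Lemma sat_Eclass_relativize (N : structure (option S)) (a : dom N)
    (h : rel N None [a; a]) c p :
  ~ bound_var p c -> ~ free ar p c ->
  forall (env : nat -> dom (Eclass h)) (e : nat -> dom N), e c = a ->
  (forall v, free ar p v -> e v = proj1_sig (env v)) ->
  (sat ar (Eclass h) env p <-> sat (arE ar) N e (relativize c p)).
Proof.
  induction p as [s f|x y|q IH|q IHq r IHr|x q IH];
    simpl; intros Hb Hf env e Hc He.
  - rewrite map_map. erewrite map_ext_in; [reflexivity|].
    intros i Hi. apply in_seq in Hi. symmetry. apply He. exists i. split; [lia|auto].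
  - rewrite (He x (or_introl eq_refl)), (He y (or_intror eq_refl)).
    split; [intros ->; auto|apply sig_eq].
  - now rewrite (IH Hb Hf env e Hc He).
  - rewrite (IHq (fun H => Hb (or_introl H)) (fun H => Hf (or_introl H)) env e Hc
      (fun v H => He v (or_introl H))).
    rewrite (IHr (fun H => Hb (or_intror H)) (fun H => Hf (or_intror H)) env e Hc
      (fun v H => He v (or_intror H))).
    tauto.
  - assert (Hcx : c <> x) by tauto.
    assert (IHq : forall d : dom (Eclass h),
      sat ar (Eclass h) (upd env x d) q <->
      sat (arE ar) N (upd e x (proj1_sig d)) (relativize c q)).
    { intros d. apply IH; [tauto|intros H; apply Hf; auto|now rewrite upd_neq|].
      intros v Hv. unfold upd. destruct (Nat.eqb_spec v x); auto. }
    split.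
    + intros [d Hd]. exists (proj1_sig d). simpl. rewrite upd_neq, upd_eq, Hc by auto.
      split; [exact (proj2_sig d)|]. now apply IHq.
    + intros [b [Hab Hd]]. simpl in Hab. rewrite upd_neq, upd_eq, Hc in Hab by auto.
      exists (exist _ b Hab). now apply IHq.
Qed.

Lemma map_existT_index (J : Type) (P : J -> Type) j j' (l : list (P j)) (l' : list (P j')) :
  map (existT P j) l = map (existT P j') l' -> l <> [] -> j = j'.
Proof.
  destruct l as [|x l]; [tauto|]. destruct l'; simpl; [discriminate|].
  intros H _. now inversion H.
Qed.

Lemma map_existT_inj (J : Type) (P : J -> Type) j : forall l1 l2 : list (P j),
  map (existT P j) l1 = map (existT P j) l2 -> l1 = l2.
Proof.
  induction l1 as [|x l1 IH]; destruct l2 as [|y l2]; simpl; try discriminate; auto.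
  intros H. injection H. intros H2 H1. apply inj_pair2 in H1. subst. f_equal. auto.
Qed.

Lemma models_relativized_sentence L (N : structure (option S)) p : Sent ar L p ->
  (models (arE ar) N (relativized_sentence p) <->
   exists b, sat (arE ar) N (fun _ => b) (relativize (fresh p) p)).
Proof.
  intros Hs. rewrite (models_sentence (fun _ => pt N) (sent_relativized Hs)). simpl.
  assert (Hfree : forall b v, free (arE ar) (relativize (fresh p) p) v ->
    upd (fun _ => pt N) (fresh p) b v = b).
  { intros b v Hv. destruct (free_relativize Hv) as [->|Hf]; [apply upd_eq|].
    destruct (proj1 Hs v Hf). }
  split; intros [b Hb]; exists b; revert Hb; apply sat_ext_free; intros v Hv;
    rewrite Hfree; auto.
Qed.

Section Ecombination.
Variables (L : S -> Prop) (J : Type) (j0 : J) (A : J -> structure S).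
(* An E-combination interprets a nullary symbol as true when it is true in some
   component, so components must agree on nullary symbols. *)
Hypothesis nullary_agree :
  forall j j' s, L s -> ar s = 0 -> rel (A j) s [] -> rel (A j') s [].

Lemma sat_Ecomb_relativize p c : uses L p -> ~ bound_var p c -> ~ free ar p c ->
  forall j (env : nat -> dom (A j)) (e : nat -> dom (Ecomb j0 A)),
  projT1 (e c) = j -> (forall v, free ar p v -> e v = existT _ j (env v)) ->
  (sat ar (A j) env p <-> sat (arE ar) (Ecomb j0 A) e (relativize c p)).
Proof.
  induction p as [s f|x y|q IH|q IHq r IHr|x q IH];
    simpl; intros Hu Hb Hf j env e Hc He.
  - set (l := map (fun i => env (f i)) (seq 0 (ar s))).
    assert (Hm : map (fun i => e (f i)) (seq 0 (ar s)) = map (existT _ j) l).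
    { unfold l. rewrite map_map. apply map_ext_in. intros i Hi. apply in_seq in Hi.
      apply He. exists i. split; [lia|auto]. }
    rewrite Hm. split; [intros H; now exists j, l|].
    intros [j' [l' [H1 H2]]]. destruct l as [|z zs] eqn:El.
    + destruct l'; [|discriminate]. apply (@nullary_agree j' j s Hu); auto.
      apply (f_equal (@length _)) in El. unfold l in El.
      now rewrite length_map, length_seq in El.
    + rewrite <- El in *. assert (j = j') by (apply (map_existT_index H1); now rewrite El).
      subst j'.
      apply (@map_existT_inj J (fun j => dom (A j))) in H1. now subst l'.
  - rewrite (He x (or_introl eq_refl)), (He y (or_intror eq_refl)).
    split; [intros ->; auto|intros H; now apply inj_pair2 in H].
  - now rewrite (IH Hu Hb Hf j env e Hc He).
  - destruct Hu as [Hu1 Hu2].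
    rewrite (IHq Hu1 (fun H => Hb (or_introl H)) (fun H => Hf (or_introl H)) j env e Hc
      (fun v H => He v (or_introl H))).
    rewrite (IHr Hu2 (fun H => Hb (or_intror H)) (fun H => Hf (or_intror H)) j env e Hc
      (fun v H => He v (or_intror H))).
    tauto.
  - assert (Hcx : c <> x) by tauto.
    assert (IHq : forall d : dom (A j), sat ar (A j) (upd env x d) q <->
      sat (arE ar) (Ecomb j0 A) (upd e x (existT _ j d)) (relativize c q)).
    { intros d. apply IH; [auto|tauto|intros H; apply Hf; auto|now rewrite upd_neq|].
      intros v Hv. unfold upd. destruct (Nat.eqb_spec v x); auto. }
    split.
    + intros [d Hd]. exists (existT _ j d). simpl. rewrite upd_neq, upd_eq by auto.
      split; [exact Hc|]. now apply IHq.
    + intros [[j' y] [Hj Hd]]. simpl in Hj. rewrite upd_neq, upd_eq, Hc in Hj by auto.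
      simpl in Hj. subst j'. exists y. now apply IHq.
Qed.

Lemma models_component_relativized p j (x : dom (A j)) : Sent ar L p ->
  (models ar (A j) p <->
   sat (arE ar) (Ecomb j0 A) (fun _ => existT _ j x) (relativize (fresh p) p)).
Proof.
  intros Hs. rewrite (models_sentence (fun _ => x) Hs).
  apply sat_Ecomb_relativize; [apply Hs|apply fresh_not_bound|apply Hs|reflexivity|].
  intros v Hv. now destruct (proj1 Hs v Hv).
Qed.

Lemma models_Ecomb_relativized p : Sent ar L p ->
  (models (arE ar) (Ecomb j0 A) (relativized_sentence p) <-> exists j, models ar (A j) p).
Proof.
  intros Hs. rewrite (models_relativized_sentence _ Hs). split.
  - intros [[j x] Hx]. exists j. now apply (models_component_relativized x Hs).
  - intros [j Hj]. exists (existT _ j (pt (A j))).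
    now apply (models_component_relativized (pt (A j)) Hs).
Qed.

Lemma rel_Ecomb_nullary s : L s -> ar s = 0 ->
  (rel (Ecomb j0 A) (Some s) [] <-> exists j, rel (A j) s []).
Proof.
  intros Hs H0. simpl. split.
  - intros [j [l [Hl Hr]]]. destruct l; [|discriminate]. eauto.
  - intros [j Hj]. now exists j, [].
Qed.
End Ecombination.

Lemma models_Eclass_relativized L (N : structure (option S)) (a : dom N)
    (h : rel N None [a; a]) p : Sent ar L p ->
  (models ar (Eclass h) p <-> sat (arE ar) N (fun _ => a) (relativize (fresh p) p)).
Proof.
  intros Hs. rewrite (models_sentence (fun _ => exist _ a h : dom (Eclass h)) Hs).
  apply sat_Eclass_relativize; [apply fresh_not_bound|apply Hs|reflexivity|].
  intros v Hv. now destruct (proj1 Hs v Hv).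
Qed.

End Relativization.

(** * Ultrapowers *)

Definition ultrafilter (J : Type) (U : (J -> Prop) -> Prop) : Prop :=
  (forall X Y, U X -> U Y -> U (fun j => X j /\ Y j)) /\
  (forall X Y : J -> Prop, (forall j, X j -> Y j) -> U X -> U Y) /\
  (forall X, U X -> exists j, X j) /\
  (forall X, U X \/ U (fun j => ~ X j)).

Lemma ultrafilter_extension (J : Type) (B : (J -> Prop) -> Prop) :
  (exists X, B X) -> (forall X, B X -> exists j, X j) ->
  (forall X Y, B X -> B Y -> exists Z, B Z /\ forall j, Z j -> X j /\ Y j) ->
  exists U, ultrafilter U /\ forall X, B X -> U X.
Proof.
  intros [X0 HX0] Hne Hdir.
  set (F := fun X : J -> Prop => exists Y, B Y /\ forall j, Y j -> X j).
  assert (HF : filter.ProperFilter F).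
  { apply filter.Build_ProperFilter_ex.
    - intros X [Y [HY HYX]]. destruct (Hne Y HY) as [j Hj]. eauto.
    - constructor.
      + exists X0. split; [exact HX0|]. intros j _. exact I.
      + intros X Y [X' [HX' HX]] [Y' [HY' HY]].
        destruct (Hdir X' Y' HX' HY') as [Z [HZ HZXY]].
        exists Z. split; [exact HZ|]. intros j Hj. destruct (HZXY j Hj).
        split; [apply HX|apply HY]; assumption.
      + intros X Y HXY [Z [HZ HZX]]. exists Z. split; [exact HZ|]. intros j Hj.
        apply HXY. now apply HZX. }
  destruct (filter.ultraFilterLemma HF) as [U [HU HFU]].
  pose proof (@filter.filter_filter _ U (filter.ultra_proper (F := U))) as HUf.
  exists U. split; [|intros X HX; apply HFU; exists X; split; auto].
  split; [|split; [|split]].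
  - exact (@filter.filterI _ U HUf).
  - intros X Y HXY. exact (filter.filterS HXY).
  - intros X HX. exact (filter.filter_ex HX).
  - intros X. exact (filter.in_ultra_setVsetC X HU).
Qed.

Section Ultrapower.
Variables (S : Type) (ar : S -> nat) (M : structure S) (J : Type)
  (U : (J -> Prop) -> Prop).
Hypothesis HU : ultrafilter U.

Lemma ultra_and X Y : U (fun j => X j /\ Y j) <-> U X /\ U Y.
Proof.
  destruct HU as [HI [HS _]]. split.
  - intros H. split; revert H; apply HS; tauto.
  - intros [HX HY]. now apply HI.
Qed.

Lemma ultra_mono (X Y : J -> Prop) : (forall j, X j -> Y j) -> U X -> U Y.
Proof. apply HU. Qed.

Lemma ultra_not X : U (fun j => ~ X j) <-> ~ U X.
Proof.
  destruct HU as [_ [_ [Hne Hdec]]]. split.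
  - intros H1 H2. destruct (Hne _ (proj2 (ultra_and _ _) (conj H1 H2))) as [j []]; auto.
  - intros H. destruct (Hdec X); tauto.
Qed.

Lemma ultra_const (P : Prop) : U (fun _ => P) <-> P.
Proof.
  destruct HU as [_ [_ [Hne Hdec]]]. split.
  - intros H. now destruct (Hne _ H).
  - intros H. destruct (Hdec (fun _ => P)) as [H'|H']; [exact H'|].
    now destruct (Hne _ H').
Qed.

Definition ueq (f g : J -> dom M) : Prop := U (fun j => f j = g j).

Lemma ueq_refl f : ueq f f.
Proof. apply (@ultra_mono (fun _ => True)); [auto|now apply ultra_const]. Qed.

Lemma ueq_trans f g h : ueq f g -> ueq g h -> ueq f h.
Proof.
  intros H1 H2. apply (@ultra_mono (fun j => f j = g j /\ g j = h j)).
  - intros j [H H']. congruence.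
  - now apply ultra_and.
Qed.

Lemma ueq_sym f g : ueq f g -> ueq g f.
Proof. apply ultra_mono. auto. Qed.

(* Elements of the ultrapower are the [ueq]-classes, represented as predicates. *)
Definition ultra_dom : Type := {P : (J -> dom M) -> Prop | exists f, P = ueq f}.

Definition ucls (f : J -> dom M) : ultra_dom := exist _ (ueq f) (ex_intro _ f eq_refl).

Definition urep (a : ultra_dom) : J -> dom M :=
  proj1_sig (constructive_indefinite_description _ (proj2_sig a)).

Lemma ucls_urep a : ucls (urep a) = a.
Proof.
  apply sig_eq. unfold urep. simpl.
  destruct (constructive_indefinite_description _ _). simpl. now symmetry.
Qed.

Lemma ucls_eq f g : ucls f = ucls g <-> ueq f g.
Proof.
  split.
  - intros H. apply (f_equal (@proj1_sig _ _)) in H. simpl in H.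
    rewrite H. apply ueq_refl.
  - intros H. apply sig_eq. simpl. apply functional_extensionality. intros k.
    apply propositional_extensionality. split; intros H1.
    + exact (ueq_trans (ueq_sym H) H1).
    + exact (ueq_trans H H1).
Qed.

Lemma urep_ucls f : ueq (urep (ucls f)) f.
Proof. apply ucls_eq. apply ucls_urep. Qed.

Definition ultrapower : structure S :=
  {| dom := ultra_dom; pt := ucls (fun _ => pt M);
     rel := fun s l => U (fun j => rel M s (map (fun a => urep a j) l)) |}.

Theorem los p : forall env : nat -> dom ultrapower,
  sat ar ultrapower env p <-> U (fun j => sat ar M (fun v => urep (env v) j) p).
Proof.
  induction p as [s f|x y|q IH|q IHq r IHr|x q IH]; intros env; simpl.
  - split; apply ultra_mono; intros j; now rewrite map_map.
  - transitivity (ueq (urep (env x)) (urep (env y))); [|reflexivity].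
    now rewrite <- ucls_eq, !ucls_urep.
  - now rewrite IH, ultra_not.
  - now rewrite IHq, IHr, ultra_and.
  - assert (Hupd : forall d j, (fun v => urep (upd env x d v) j) =
                                upd (fun v => urep (env v) j) x (urep d j)).
    { intros d j. apply functional_extensionality. intros v. unfold upd.
      now destruct (v =? x). }
    split.
    + intros [d Hd]. rewrite IH in Hd. revert Hd. apply ultra_mono. intros j Hj.
      exists (urep d j). now rewrite <- Hupd.
    + intros H.
      set (g := fun j => epsilon (inhabits (pt M))
                  (fun m => sat ar M (upd (fun v => urep (env v) j) x m) q)).
      exists (ucls g). rewrite IH.
      apply (@ultra_mono (fun j => (exists m, sat ar M (upd (fun v => urep (env v) j) x m) q)
                               /\ urep (ucls g) j = g j)).
      * intros j [Hj Hg]. rewrite Hupd, Hg. unfold g. now apply epsilon_spec.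
      * apply ultra_and. split; [exact H|apply urep_ucls].
Qed.

Lemma ultrapower_models L p : Sent ar L p -> (models ar ultrapower p <-> models ar M p).
Proof.
  intros H. rewrite (models_sentence (fun _ => pt ultrapower) H), los.
  rewrite <- (ultra_const (models ar M p)).
  split; apply ultra_mono; intros j;
    now rewrite (models_sentence (fun v => urep (pt ultrapower) j) H).
Qed.
End Ultrapower.

(** * E-closure as topological closure *)

Section Closure.
Variables (S : Type) (ar : S -> nat) (L : S -> Prop) (Z : S -> Prop).

Lemma Th_and (A : structure S) p q : Th ar L A (And p q) <-> Th ar L A p /\ Th ar L A q.
Proof. unfold Th. rewrite sent_and, models_and. tauto. Qed.

Lemma Th_neg (A : structure S) p : Sent ar L p -> (Th ar L A (Neg p) <-> ~ Th ar L A p).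
Proof. intros H. unfold Th. rewrite sent_neg, (models_neg A H). tauto. Qed.

Lemma Th_eq_of_incl (A B : structure S) :
  (forall p, Th ar L A p -> Th ar L B p) -> Th ar L A = Th ar L B.
Proof.
  intros H. apply functional_extensionality. intros p. apply propositional_extensionality.
  split; [apply H|]. intros Hp. apply NNPP. intros Hn.
  apply (proj1 (Th_neg B (proj1 Hp)) (H _ (proj2 (Th_neg A (proj1 Hp)) Hn))). exact Hp.
Qed.

Definition fixes_nullary (A : structure S) : Prop :=
  forall s, L s -> ar s = 0 -> (rel A s [] <-> Z s).

Definition admissible (T : form S -> Prop) : Prop :=
  exists A, T = Th ar L A /\ fixes_nullary A.

(* The closure of [G] in the space of admissible theories, whose basic open
   sets are [{T | T p}] for sentences [p]. *)
Definition closure (G : (form S -> Prop) -> Prop) (T : form S -> Prop) : Prop :=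
  admissible T /\ forall p, T p -> exists T', G T' /\ T' p.

Definition closed (C : (form S -> Prop) -> Prop) : Prop := forall T, closure C T -> C T.

Definition isolated (C : (form S -> Prop) -> Prop) (T : form S -> Prop) : Prop :=
  C T /\ exists p, T p /\ forall T', C T' -> T' p -> T' = T.

Definition isolated_dense (C : (form S -> Prop) -> Prop) : Prop :=
  forall T, C T -> closure (isolated C) T.

Lemma admissible_sent T p : admissible T -> T p -> Sent ar L p.
Proof. intros [A [-> _]] [H _]. exact H. Qed.

Lemma admissible_and T p q : admissible T -> (T (And p q) <-> T p /\ T q).
Proof. intros [A [-> _]]. apply Th_and. Qed.

Lemma admissible_neg T p : admissible T -> Sent ar L p -> (T (Neg p) <-> ~ T p).
Proof. intros [A [-> _]]. apply Th_neg. Qed.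

Lemma admissible_verum T : admissible T -> T (verum S).
Proof. intros [A [-> _]]. split; [apply sent_verum|apply models_verum]. Qed.

Lemma admissible_separate T T' : admissible T -> admissible T' -> T <> T' ->
  exists p, T p /\ ~ T' p.
Proof.
  intros [A [-> _]] [B [-> _]] Hne. apply NNPP. intros H. apply Hne. symmetry.
  apply Th_eq_of_incl. intros p Hp. apply NNPP. intros Hn. apply H. exists (Neg p).
  split; [now apply Th_neg; [apply Hp|]|]. rewrite Th_neg by apply Hp. tauto.
Qed.

Lemma fixes_nullary_Th (A B : structure S) :
  Th ar L A = Th ar L B -> fixes_nullary B -> fixes_nullary A.
Proof.
  intros HAB HB s Hs H0. rewrite <- (HB s Hs H0), <- !(models_nullary _ H0).
  assert (Hsent : Sent ar L (Rel s (fun i => i))).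
  { split; simpl; auto. intros v [i [Hi _]]. lia. }
  split; intros H.
  - assert (HT : Th ar L A (Rel s (fun i => i))) by now split. rewrite HAB in HT. apply HT.
  - assert (HT : Th ar L B (Rel s (fun i => i))) by now split. rewrite <- HAB in HT. apply HT.
Qed.

Section EclassOfCombination.
Variables (J : Type) (j0 : J) (A : J -> structure S).
Hypothesis A_fixes : forall j, fixes_nullary (A j).

Lemma components_agree : forall j j' s, L s -> ar s = 0 -> rel (A j) s [] -> rel (A j') s [].
Proof. intros j j' s Hs H0 H. apply (A_fixes j' Hs H0), (A_fixes j Hs H0), H. Qed.

Variables (N : structure (option S)) (a : dom N) (h : rel N None [a; a]).
Hypothesis HN : elem_equiv ar L N (Ecomb j0 A).

Lemma Eclass_fixes_nullary : fixes_nullary (Eclass h).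
Proof.
  intros s Hs H0. simpl.
  assert (Hsent : Sent (arE ar) (LE L) (Rel (Some s) (fun i => i))).
  { split; simpl; auto. intros v [i [Hi _]]. lia. }
  rewrite <- (@models_nullary _ (arE ar) N (Some s) H0).
  rewrite (HN Hsent), (@models_nullary _ (arE ar) _ (Some s) H0).
  rewrite (rel_Ecomb_nullary (L := L) j0 A Hs H0). split.
  - intros [j Hj]. now apply (A_fixes j Hs H0).
  - intros HZ. exists j0. now apply (A_fixes j0 Hs H0).
Qed.

Lemma Eclass_models_component p :
  Th ar L (Eclass h) p -> exists j, models ar (A j) p.
Proof.
  intros [Hs Hm]. apply (models_Ecomb_relativized j0 components_agree Hs).
  apply (HN (sent_relativized Hs)), (models_relativized_sentence _ Hs).
  exists a. now apply (models_Eclass_relativized h Hs).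
Qed.
End EclassOfCombination.

Section UltrapowerOfCombination.
Variables (J : Type) (j0 : J) (A : J -> structure S) (U : (J -> Prop) -> Prop).
Hypotheses (A_fixes : forall j, fixes_nullary (A j)) (HU : ultrafilter U).

Let N := ultrapower (Ecomb j0 A) U.

Definition diagonal : dom N :=
  ucls U (fun j => existT _ j (pt (A j)) : dom (Ecomb j0 A)).

Lemma diagonal_E : rel N None [diagonal; diagonal].
Proof. simpl. apply (@ultra_mono _ U HU (fun _ => True)); [reflexivity|now apply ultra_const]. Qed.

Lemma Eclass_diagonal_models p : Sent ar L p ->
  U (fun j => models ar (A j) p) -> models ar (Eclass diagonal_E) p.
Proof.
  intros Hs Hp. apply (models_Eclass_relativized diagonal_E Hs), (los _ HU).
  apply (@ultra_mono _ U HU (fun j => models ar (A j) p /\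
    urep diagonal j = existT _ j (pt (A j)))).
  - intros j [Hj ->]. now apply (models_component_relativized j0 (components_agree A_fixes)).
  - apply (ultra_and HU). split; [exact Hp|apply (urep_ucls HU)].
Qed.
End UltrapowerOfCombination.

Lemma ClE_sub_closure TT : subset TT admissible -> forall T, ClE ar L TT T -> closure TT T.
Proof.
  intros HTT T [J [j0 [A [HA [N [HN [a [h ->]]]]]]]].
  assert (A_fixes : forall j, fixes_nullary (A j)).
  { intros j. destruct (HTT _ (HA j)) as [B [HB HBfix]]. exact (fixes_nullary_Th HB HBfix). }
  split; [exists (Eclass h); split; [reflexivity|exact (Eclass_fixes_nullary A_fixes h HN)]|].
  intros p Hp. destruct (Eclass_models_component A_fixes HN Hp) as [j Hj].
  exists (Th ar L (A j)). split; [apply HA|split; [apply Hp|exact Hj]].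
Qed.

Lemma closure_sub_ClE TT : subset TT admissible -> forall T, closure TT T -> ClE ar L TT T.
Proof.
  intros HTT T [[B [-> HBfix]] Hcl].
  set (J := {T' : form S -> Prop | TT T'}).
  assert (HA : forall j : J, {A : structure S | proj1_sig j = Th ar L A /\ fixes_nullary A}).
  { intros j. apply constructive_indefinite_description, HTT, (proj2_sig j). }
  set (A := fun j => proj1_sig (HA j)).
  assert (HAj : forall j, proj1_sig j = Th ar L (A j) /\ fixes_nullary (A j))
    by (intros j; exact (proj2_sig (HA j))).
  destruct (Hcl (verum S) (admissible_verum (ex_intro _ B (conj eq_refl HBfix))))
    as [T1 [HT1 _]].
  set (j0 := exist _ T1 HT1 : J).
  set (base := fun X : J -> Prop => exists p, Th ar L B p /\ X = fun j => proj1_sig j p).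
  assert (Hbase : exists U, ultrafilter U /\ forall X, base X -> U X).
  { apply ultrafilter_extension.
    - exists (fun j : J => proj1_sig j (verum S)). exists (verum S).
      split; [split; [apply sent_verum|apply models_verum]|reflexivity].
    - intros X [p [Hp ->]]. destruct (Hcl p Hp) as [T' [HT' HT'p]].
      now exists (exist _ T' HT').
    - intros X Y [p [Hp ->]] [q [Hq ->]]. exists (fun j : J => proj1_sig j (And p q)).
      split; [exists (And p q); split; [now apply Th_and|reflexivity]|].
      intros j. rewrite (proj1 (HAj j)). apply Th_and. }
  destruct Hbase as [U [HU HbaseU]].
  exists J, j0, A. split; [intros j; rewrite <- (proj1 (HAj j)); exact (proj2_sig j)|].
  exists (ultrapower (Ecomb j0 A) U). split.
  - intros p Hp. exact (ultrapower_models _ HU Hp).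
  - exists (diagonal j0 A U), (diagonal_E j0 A HU). apply Th_eq_of_incl.
    intros p Hp. split; [apply Hp|].
    apply (@Eclass_diagonal_models J j0 A U (fun j => proj2 (HAj j)) HU p (proj1 Hp)).
    apply (@ultra_mono _ U HU (fun j => proj1_sig j p)); [|apply HbaseU; now exists p].
    intros j Hj. rewrite (proj1 (HAj j)) in Hj. apply Hj.
Qed.

Theorem ClE_closure TT : subset TT admissible -> ClE ar L TT = closure TT.
Proof.
  intros HTT. apply functional_extensionality. intros T. apply propositional_extensionality.
  split; [apply ClE_sub_closure|apply closure_sub_ClE]; assumption.
Qed.

(** * Least generating sets *)

Lemma closure_mono G G' : subset G G' -> subset (closure G) (closure G').
Proof.
  intros HG T [Hadm H]. split; [exact Hadm|]. intros p Hp.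
  destruct (H p Hp) as [T' [HT' HT'p]]. eauto.
Qed.

Lemma closure_admissible G : subset (closure G) admissible.
Proof. intros T []. assumption. Qed.

Lemma closure_closed G : closed (closure G).
Proof.
  intros T [Hadm H]. split; [exact Hadm|]. intros p Hp.
  destruct (H p Hp) as [T' [[_ H'] HT'p]]. now apply H'.
Qed.

Lemma closure_of_mem G T : admissible T -> G T -> closure G T.
Proof. intros Hadm HT. split; [exact Hadm|]. eauto. Qed.

Lemma closed_separate B T : closed B -> admissible T -> ~ B T ->
  exists q, T q /\ forall T', B T' -> ~ T' q.
Proof.
  intros HB Hadm HnB. apply NNPP. intros H. apply HnB, HB. split; [exact Hadm|].
  intros p Hp. apply NNPP. intros H'. apply H. exists p. split; [exact Hp|].
  intros T' HT' HT'p. apply H'. eauto.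
Qed.

Lemma nonisolated_neighbour C T : C T -> ~ isolated C T ->
  forall p, T p -> exists T', C T' /\ T' p /\ T' <> T.
Proof.
  intros HT Hn p Hp. apply NNPP. intros H. apply Hn. split; [exact HT|].
  exists p. split; [exact Hp|]. intros T' HT' HT'p. apply NNPP. intros Hne. apply H. eauto.
Qed.

Lemma closure_of_nonisolated D X T : D T -> ~ isolated D T -> admissible T ->
  (forall T', D T' -> T' <> T -> closure X T') -> closure X T.
Proof.
  intros HT Hn Hadm Hothers. split; [exact Hadm|]. intros p Hp.
  destruct (nonisolated_neighbour HT Hn Hp) as [T' [HT' [HT'p Hne]]].
  exact (proj2 (Hothers T' HT' Hne) p HT'p).
Qed.

Section LeastGenerating.
Variable C : (form S -> Prop) -> Prop.
Hypotheses (C_admissible : subset C admissible) (C_closed : closed C).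

Lemma generating_iff G : generating ar L C G <-> subset G C /\ forall T, C T -> closure G T.
Proof.
  unfold generating. split; intros [HGC HG]; split; auto.
  - rewrite <- HG, ClE_closure; [auto|]. intros T HT. now apply C_admissible, HGC.
  - rewrite ClE_closure by (intros T HT; now apply C_admissible, HGC).
    apply functional_extensionality. intros T. apply propositional_extensionality.
    split; [|apply HG]. intros HT. now apply C_closed, (closure_mono HGC).
Qed.

Lemma generating_isolated G T : generating ar L C G -> isolated C T -> G T.
Proof.
  rewrite generating_iff. intros [HGC HG] [HT [p [Hp Huniq]]].
  destruct (proj2 (HG T HT) p Hp) as [T' [HT' HT'p]].
  now rewrite <- (Huniq T' (HGC _ HT') HT'p).
Qed.

Lemma generating_remove_nonisolated G T0 : generating ar L C G -> G T0 ->
  ~ isolated C T0 -> generating ar L C (fun T => G T /\ T <> T0).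
Proof.
  rewrite !generating_iff. intros [HGC HG] HT0 Hn. split; [intros T [HT _]; auto|].
  assert (Hoff : forall T, C T -> T <> T0 -> closure (fun T => G T /\ T <> T0) T).
  { intros T HT Hne. split; [now apply C_admissible|]. intros p Hp.
    destruct (admissible_separate (C_admissible HT) (C_admissible (HGC _ HT0)) Hne)
      as [q [Hq Hnq]].
    destruct (proj2 (HG T HT) (And p q)) as [T' [HT' HT'pq]];
      [now apply admissible_and; [apply C_admissible|]|].
    apply (admissible_and _ _ (C_admissible (HGC _ HT'))) in HT'pq.
    exists T'. split; [split; [exact HT'|intros ->; tauto]|tauto]. }
  intros T HT. destruct (classic (T = T0)) as [->|Hne]; [|now apply Hoff].
  apply (closure_of_nonisolated HT Hn (C_admissible HT)). exact Hoff.
Qed.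

Theorem has_least_gen_iff_isolated_dense : has_least_gen ar L C <-> isolated_dense C.
Proof.
  split.
  - intros [G [HG [Hleast _]]].
    assert (HGiso : subset G (isolated C)).
    { intros T0 HT0. apply NNPP. intros Hn.
      destruct (Hleast _ (generating_remove_nonisolated HG HT0 Hn) T0 HT0) as [_ H].
      now apply H. }
    intros T HT. apply (closure_mono HGiso). now apply generating_iff in HG; apply HG.
  - intros Hdense.
    assert (Hiso : generating ar L C (isolated C))
      by (apply generating_iff; split; [intros T []; auto|exact Hdense]).
    exists (isolated C). split; [exact Hiso|split].
    + intros G HG T HT. exact (generating_isolated HG HT).
    + intros G HG HGiso. apply functional_extensionality. intros T.
      apply propositional_extensionality. split; [apply HGiso|].
      intros HT. exact (generating_isolated HG HT).
Qed.
End LeastGenerating.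

Lemma closure_union G1 G2 G : subset G1 admissible -> subset G2 admissible ->
  (forall T, G T <-> G1 T \/ G2 T) ->
  forall T, closure G T <-> closure G1 T \/ closure G2 T.
Proof.
  intros HG1 HG2 HG T. split.
  - intros [Hadm Hcl]. apply NNPP. intros H.
    destruct (closed_separate (B := closure G1) (@closure_closed G1) Hadm) as [p [Hp Hnp]];
      [tauto|].
    destruct (closed_separate (B := closure G2) (@closure_closed G2) Hadm) as [q [Hq Hnq]];
      [tauto|].
    destruct (Hcl (And p q)) as [T' [HT' HT'pq]]; [now apply admissible_and|].
    apply HG in HT'. destruct HT' as [HT'|HT'].
    + apply (Hnp T'); [now apply closure_of_mem; auto|].
      now apply (admissible_and _ _ (HG1 _ HT')) in HT'pq.
    + apply (Hnq T'); [now apply closure_of_mem; auto|].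
      now apply (admissible_and _ _ (HG2 _ HT')) in HT'pq.
  - intros [H|H]; revert H; apply closure_mono; intros T' H'; apply HG; auto.
Qed.

Section UnionOfClosed.
Variables A B C : (form S -> Prop) -> Prop.
Hypotheses (A_admissible : subset A admissible) (B_admissible : subset B admissible)
  (B_closed : closed B) (C_union : forall T, C T <-> A T \/ B T).

Lemma isolated_union_outside T : A T -> ~ B T -> isolated A T -> isolated C T.
Proof.
  intros HA HnB [_ [p [Hp Huniq]]].
  destruct (closed_separate B_closed (A_admissible HA) HnB) as [q [Hq Hnq]].
  split; [now apply C_union; left|]. exists (And p q).
  split; [now apply admissible_and; [apply A_admissible|]|].
  intros T' HT' HT'pq. apply C_union in HT'.
  destruct HT' as [HT'|HT'];
    apply admissible_and in HT'pq; auto; [now apply Huniq|now destruct (Hnq T')].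
Qed.

Lemma closure_isolated_union_outside T : A T -> ~ B T ->
  (closure (isolated A) T <-> closure (isolated C) T).
Proof.
  intros HA HnB.
  destruct (closed_separate B_closed (A_admissible HA) HnB) as [q [Hq Hnq]].
  assert (Hpq : forall p, T p -> T (And p q))
    by (intros p Hp; now apply admissible_and; [apply A_admissible|]).
  split; intros [Hadm Hcl]; split; auto; intros p Hp;
    destruct (Hcl _ (Hpq p Hp)) as [T1 [HT1 HT1pq]].
  - assert (HA1 : A T1) by apply HT1. apply admissible_and in HT1pq; auto.
    assert (HnB1 : ~ B T1) by (intros HB1; now apply (Hnq T1)).
    exists T1. split; [now apply isolated_union_outside|tauto].
  - destruct HT1 as [HC1 [r [Hr Huniq]]].
    assert (Hadm1 : admissible T1)
      by (apply C_union in HC1; destruct HC1; auto).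
    apply admissible_and in HT1pq; auto.
    assert (HnB1 : ~ B T1) by (intros HB1; now apply (Hnq T1)).
    assert (HA1 : A T1) by (apply C_union in HC1; tauto).
    exists T1. split; [|tauto]. split; [exact HA1|]. exists r. split; [exact Hr|].
    intros T' HT' HT'r. apply Huniq; [apply C_union|]; auto.
Qed.

Hypothesis meet_subsingleton : forall T T', A T -> B T -> A T' -> B T' -> T = T'.

Lemma closure_isolated_union_left T : isolated_dense A -> A T ->
  ~ B T \/ ~ isolated A T -> closure (isolated C) T.
Proof.
  intros HdA HA Hcase. destruct (classic (B T)) as [HB|HnB].
  - assert (Hn : ~ isolated A T) by tauto.
    apply (closure_of_nonisolated HA Hn (A_admissible HA)). intros T' HA' Hne.
    assert (HnB' : ~ B T') by (intros HB'; now apply Hne, meet_subsingleton).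
    now apply closure_isolated_union_outside, HdA.
  - now apply closure_isolated_union_outside, HdA.
Qed.

Lemma isolated_dense_union_left : isolated_dense C -> isolated_dense A.
Proof.
  intros HdC T HA. destruct (classic (isolated A T)) as [Hiso|Hn].
  - apply closure_of_mem; auto.
  - destruct (classic (B T)) as [HB|HnB].
    + apply (closure_of_nonisolated HA Hn (A_admissible HA)). intros T' HA' Hne.
      assert (HnB' : ~ B T') by (intros HB'; now apply Hne, meet_subsingleton).
      apply (closure_isolated_union_outside HA' HnB'), HdC, C_union. auto.
    + apply (closure_isolated_union_outside HA HnB), HdC, C_union. auto.
Qed.
End UnionOfClosed.

Lemma isolated_union_both A B C T : subset A admissible -> subset B admissible ->
  (forall T, C T <-> A T \/ B T) -> isolated A T -> isolated B T -> isolated C T.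
Proof.
  intros HAadm HBadm HC [HA [p [Hp HuA]]] [HB [q [Hq HuB]]].
  split; [apply HC; auto|]. exists (And p q). split; [now apply admissible_and; auto|].
  intros T' HT' HT'pq. apply HC in HT'.
  destruct HT' as [HT'|HT']; apply admissible_and in HT'pq; auto;
    [apply HuA|apply HuB]; tauto.
Qed.

Theorem isolated_dense_union A B C :
  subset A admissible -> subset B admissible -> closed A -> closed B ->
  (forall T, C T <-> A T \/ B T) ->
  (forall T T', A T -> B T -> A T' -> B T' -> T = T') ->
  isolated_dense C <-> isolated_dense A /\ isolated_dense B.
Proof.
  intros HAadm HBadm HAc HBc HC Hmeet.
  assert (HC' : forall T, C T <-> B T \/ A T) by (intros T; rewrite HC; tauto).
  assert (Hmeet' : forall T T', B T -> A T -> B T' -> A T' -> T = T') by auto.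
  split.
  - intros HdC. split.
    + exact (isolated_dense_union_left HAadm HBadm HBc HC Hmeet HdC).
    + exact (isolated_dense_union_left HBadm HAadm HAc HC' Hmeet' HdC).
  - intros [HdA HdB] T HT.
    destruct (classic (A T /\ (~ B T \/ ~ isolated A T))) as [[HA Hcase]|HnotA].
    + exact (closure_isolated_union_left HAadm HBadm HBc HC Hmeet HdA HA Hcase).
    + destruct (classic (B T /\ (~ A T \/ ~ isolated B T))) as [[HB Hcase]|HnotB].
      * exact (closure_isolated_union_left HBadm HAadm HAc HC' Hmeet' HdB HB Hcase).
      * assert (HA : A T) by (apply HC in HT; tauto).
        assert (HB : B T) by (apply HC in HT; tauto).
        apply closure_of_mem; [apply HAadm, HA|].
        apply (isolated_union_both HAadm HBadm HC); apply NNPP; tauto.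
Qed.

End Closure.

(** * The theories T_I *)

Lemma T_G_union S0 ar0 T0 n (F F1 F2 : (S0 -> Prop) -> Prop) :
  (forall I, F I <-> F1 I \/ F2 I) ->
  forall T, T_G ar0 T0 n F T <-> T_G ar0 T0 n F1 T \/ T_G ar0 T0 n F2 T.
Proof.
  intros HF T. unfold T_G. split.
  - intros [I [HI ->]]. apply HF in HI. destruct HI; [left|right]; eauto.
  - intros [[I [HI ->]]|[I [HI ->]]]; exists I; split; auto; apply HF; auto.
Qed.

Section IndexTheories.
Variables (S0 : Type) (ar0 : S0 -> nat) (T0 : form S0 -> Prop) (n : nat)
  (D : Type) (d : D) (r0 : S0 -> list D -> Prop).
Hypothesis T0_model : forall q, T0 q -> models ar0 (Structure d r0) q.

Let L := Sigma' ar0 T0 n.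
Let Z : S0 -> Prop := fun s => r0 s [].

Definition model_I (I : S0 -> Prop) : structure S0 :=
  Structure d (fun s l => ~ (I0 ar0 T0 n s /\ ~ I s) /\ r0 s l).

Lemma model_I_exR I l : I0 ar0 T0 n l -> (models ar0 (model_I I) (exR ar0 l) <-> I l).
Proof.
  intros Hl. split.
  - intros H. destruct (sat_exR (H (fun _ => d))) as [ls [H1 _]].
    apply NNPP. intros Hn. auto.
  - intros HI e. apply (sat_agree_syms ar0 (r2 := r0)).
    + intros s Hs l'. unfold exR in Hs. rewrite syms_iterEx in Hs. simpl in Hs.
      destruct Hs as [<-|[]]. tauto.
    + apply (proj2 Hl). exact T0_model.
Qed.

Lemma sat_model_I I q : uses (fun s => ar0 s <> n \/ I s) q ->
  forall e, sat ar0 (model_I I) e q <-> sat ar0 (Structure d r0) e q.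
Proof.
  intros Huses. apply sat_agree_syms. intros s Hs ls. apply (uses_syms Huses) in Hs.
  split; [tauto|]. intros H. split; [|exact H]. intros [[Ha _] HnI]. destruct Hs; tauto.
Qed.

Lemma T_I_model_I I p : T_I ar0 T0 n I p -> models ar0 (model_I I) p.
Proof.
  intros [_ H]. apply H. intros q [[Hq Huses]|[l [Hl [HnI ->]]]].
  - intros e. apply (sat_model_I Huses), (T0_model Hq).
  - intros e H'. destruct (sat_exR H') as [ls [H1 _]]. tauto.
Qed.

Fixpoint erase (I : S0 -> Prop) (p : form S0) : form S0 :=
  match p with
  | Rel s f => if excluded_middle_informative (I0 ar0 T0 n s /\ ~ I s)
               then Neg (verum S0) else Rel s f
  | Eqv x y => Eqv x y
  | Neg q => Neg (erase I q)
  | And q r => And (erase I q) (erase I r)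
  | Ex x q => Ex x (erase I q)
  end.

Lemma free_erase I p v : free ar0 (erase I p) v -> free ar0 p v.
Proof.
  induction p; simpl; auto.
  - destruct (excluded_middle_informative _); simpl; auto. intros [H1 [H2|H2]]; congruence.
  - intros [H|H]; auto.
  - intros [H1 H2]; auto.
Qed.

Lemma uses_erase I p : uses L p -> uses (fun s => ar0 s <> n \/ I s) (erase I p).
Proof.
  induction p; simpl; auto.
  - destruct (excluded_middle_informative _) as [Hx|Hx]; simpl; auto.
    intros [H|H]; auto. right. apply NNPP. intros H'. now apply Hx.
  - intros [H1 H2]; auto.
Qed.

Lemma sat_erase I (M : structure S0)
  (HM : forall s (g : nat -> dom M), I0 ar0 T0 n s -> ~ I s -> ~ rel M s (map g (seq 0 (ar0 s)))) :
  forall p e, sat ar0 M e p <-> sat ar0 M e (erase I p).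
Proof.
  induction p; simpl; intros e.
  - destruct (excluded_middle_informative _) as [[H1 H2]|H]; simpl; [|tauto].
    split; intros H; exfalso; [exact (HM s _ H1 H2 H)|apply H; now exists (pt M)].
  - tauto.
  - now rewrite IHp.
  - now rewrite IHp1, IHp2.
  - split; intros [x Hx]; exists x; now apply IHp.
Qed.

Hypothesis T0_complete : forall p, Sent ar0 (fun _ => True) p -> T0 p \/ T0 (Neg p).

Lemma T_I_Th I : T_I ar0 T0 n I = Th ar0 L (model_I I).
Proof.
  apply functional_extensionality. intros p. apply propositional_extensionality. split.
  - intros H. split; [exact (proj1 H)|now apply T_I_model_I].
  - intros [Hs Hm]. split; [exact Hs|]. intros M HM.
    assert (HMI : forall s (g : nat -> D), I0 ar0 T0 n s -> ~ I s ->
      ~ rel (model_I I) s (map g (seq 0 (ar0 s)))) by (intros s g H1 H2 [H3 _]; auto).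
    assert (HMM : forall s (g : nat -> dom M), I0 ar0 T0 n s -> ~ I s ->
      ~ rel M s (map g (seq 0 (ar0 s)))).
    { intros s g H1 H2 H3. apply (HM (Neg (exR ar0 s))) with (env := g);
        [right; now exists s|eapply sat_exR_intro; exact H3]. }
    assert (Huses : uses (fun s => ar0 s <> n \/ I s) (erase I p))
      by now apply uses_erase, Hs.
    assert (Hsent : Sent ar0 (fun _ => True) (erase I p))
      by (split; [intros v Hv; apply (proj1 Hs v), (free_erase Hv)|apply uses_all]).
    assert (HT0 : T0 (erase I p)).
    { destruct (T0_complete Hsent) as [H|H]; [exact H|exfalso].
      apply (proj1 (models_neg _ Hsent) (T0_model H)). intros e.
      apply (sat_model_I Huses), (proj1 (sat_erase (I := I) (M := model_I I) HMI p e)), Hm. }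
    intros e. apply (proj2 (sat_erase (I := I) (M := M) HMM p e)), HM. left. now split.
Qed.

Lemma T_I_admissible (Hn : 1 <= n) I : admissible ar0 L Z (T_I ar0 T0 n I).
Proof.
  exists (model_I I). split; [apply T_I_Th|]. intros s _ H0. simpl. unfold Z.
  split; [tauto|]. intros H. split; [|exact H]. intros [[H1 _] _]. lia.
Qed.

Lemma T_G_admissible (Hn : 1 <= n) F : subset (T_G ar0 T0 n F) (admissible ar0 L Z).
Proof. intros T [I [_ ->]]. exact (T_I_admissible Hn I). Qed.

Let closure_TG (F : (S0 -> Prop) -> Prop) := closure ar0 L Z (T_G ar0 T0 n F).

Lemma sent_exR_I0 l : I0 ar0 T0 n l -> Sent ar0 L (exR ar0 l).
Proof. intros Hl. apply sent_exR. now right. Qed.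

Lemma exR_transfer (Fm Fp : (S0 -> Prop) -> Prop)
  (below : forall I I', Fm I -> Fp I' -> set_incl I I') T T' l :
  I0 ar0 T0 n l -> closure_TG Fm T -> closure_TG Fp T' -> T (exR ar0 l) -> T' (exR ar0 l).
Proof.
  intros Hl [HT Hm] [HT' Hp] H. apply NNPP. intros Hn.
  assert (Hs := sent_exR_I0 Hl).
  destruct (Hm _ H) as [T1 [[I [HI ->]] H1]].
  destruct (Hp (Neg (exR ar0 l))) as [T2 [[I' [HI' ->]] H2]];
    [now apply (admissible_neg HT' Hs)|].
  apply T_I_model_I in H1. apply T_I_model_I in H2.
  apply (model_I_exR I Hl) in H1.
  apply (models_neg _ Hs) in H2. apply H2, (model_I_exR I' Hl).
  exact (below I I' HI HI' l H1).
Qed.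

Lemma exR_pattern T T' : admissible ar0 L Z T -> admissible ar0 L Z T' ->
  (forall l, I0 ar0 T0 n l -> (T (exR ar0 l) <-> T' (exR ar0 l))) ->
  forall K, exists chi, T chi /\ T' chi /\
    forall I, models ar0 (model_I I) chi ->
      forall l, In l K -> I0 ar0 T0 n l -> (I l <-> T (exR ar0 l)).
Proof.
  intros HT HT' Hagree K. induction K as [|l K [chi [H1 [H2 H3]]]].
  - exists (verum S0). split; [exact (admissible_verum HT)|].
    split; [exact (admissible_verum HT')|]. intros I _ l [].
  - destruct (classic (I0 ar0 T0 n l)) as [Hl|Hnl];
      [|exists chi; split; [exact H1|split; [exact H2|]];
        intros I HI l' [<-|Hl'] Hl0; [tauto|now apply H3]].
    assert (Hs := sent_exR_I0 Hl).
    set (lit := if excluded_middle_informative (T (exR ar0 l))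
                then exR ar0 l else Neg (exR ar0 l)).
    assert (Hlit : T lit /\ T' lit /\ forall I,
      models ar0 (model_I I) lit -> (I l <-> T (exR ar0 l))).
    { unfold lit. destruct (excluded_middle_informative _) as [He|Hne].
      - split; [exact He|split; [now apply Hagree|]]. intros I HI.
        split; [tauto|intros _; now apply (model_I_exR I Hl)].
      - rewrite (admissible_neg HT Hs), (admissible_neg HT' Hs), <- (Hagree l Hl).
        split; [exact Hne|split; [exact Hne|]]. intros I HI.
        rewrite (models_neg _ Hs), (model_I_exR I Hl) in HI. tauto. }
    destruct Hlit as [Hl1 [Hl2 Hl3]].
    exists (And chi lit). rewrite (admissible_and _ _ HT), (admissible_and _ _ HT').
    split; [tauto|split; [tauto|]]. intros I HI. apply models_and in HI.
    intros l' [<-|Hl'] Hl0; [now apply Hl3|now apply H3].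
Qed.

Lemma closure_cut_meet_subsingleton (Fm Fp : (S0 -> Prop) -> Prop)
  (below : forall I I', Fm I -> Fp I' -> set_incl I I') T T' :
  closure_TG Fm T -> closure_TG Fp T -> closure_TG Fm T' -> closure_TG Fp T' -> T = T'.
Proof.
  intros HmT HpT HmT' HpT'. apply NNPP. intros Hne.
  assert (HT := proj1 HmT). assert (HT' := proj1 HmT').
  destruct (admissible_separate HT HT' Hne) as [phi [Hphi Hnphi]].
  assert (Hs : Sent ar0 L phi) by exact (admissible_sent HT Hphi).
  assert (Hagree : forall l, I0 ar0 T0 n l -> (T (exR ar0 l) <-> T' (exR ar0 l)))
    by (intros l Hl; split; apply (exR_transfer below); auto).
  destruct (exR_pattern HT HT' Hagree (syms phi)) as [chi [H1 [H2 H3]]].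
  destruct (proj2 HmT (And phi chi)) as [T1 [[I [_ ->]] HT1]];
    [now apply (admissible_and _ _ HT)|].
  destruct (proj2 HmT' (And (Neg phi) chi)) as [T2 [[I' [_ ->]] HT2]];
    [now rewrite (admissible_and _ _ HT'), (admissible_neg HT' Hs)|].
  apply T_I_model_I, models_and in HT1.
  apply T_I_model_I, models_and in HT2.
  destruct HT1 as [HT1phi HT1chi], HT2 as [HT2phi HT2chi].
  apply (models_neg _ Hs) in HT2phi. apply HT2phi. intros e.
  refine (proj2 (sat_agree_syms ar0 _ e) (HT1phi e)).
  intros s Hsym ls. destruct (classic (I0 ar0 T0 n s)) as [Hl|Hnl]; [|tauto].
  assert (E1 := H3 I HT1chi s Hsym Hl). assert (E2 := H3 I' HT2chi s Hsym Hl). tauto.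
Qed.
End IndexTheories.

Theorem corollary4p15 (S0 : Type) (ar0 : S0 -> nat) (T0 : form S0 -> Prop) (n : nat)
  (HT0 : complete_theory ar0 (fun _ => True) T0)
  (HLU : LU ar0 T0)
  (Hn : 1 <= n)
  (HI0 : infinite (I0 ar0 T0 n))
  (F Fm Fp : (S0 -> Prop) -> Prop)
  (HF : forall I, F I -> index_set ar0 T0 n I)
  (HFinf : infinite_family F)
  (HFlin : linear_family F)
  (HFgap : infinite_gaps F)
  (Hcut : is_cut F Fm Fp) :
  has_least_gen ar0 (Sigma' ar0 T0 n) (ClE ar0 (Sigma' ar0 T0 n) (T_G ar0 T0 n F)) <->
  (has_least_gen ar0 (Sigma' ar0 T0 n) (ClE ar0 (Sigma' ar0 T0 n) (T_G ar0 T0 n Fm)) /\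
   has_least_gen ar0 (Sigma' ar0 T0 n) (ClE ar0 (Sigma' ar0 T0 n) (T_G ar0 T0 n Fp))).
Proof.
  destruct HT0 as [_ [[[D d r0] HM] [_ Hcompl]]].
  destruct Hcut as [HFunion [_ [_ [_ Hbelow]]]].
  assert (HTG := T_G_admissible HM Hcompl Hn).
  rewrite !(ClE_closure (HTG _)), !(has_least_gen_iff_isolated_dense
    (@closure_admissible _ _ _ _ _) (@closure_closed _ _ _ _ _)).
  apply isolated_dense_union.
  - apply closure_admissible.
  - apply closure_admissible.
  - apply closure_closed.
  - apply closure_closed.
  - apply closure_union; [apply HTG|apply HTG|]. now apply T_G_union.
  - apply (closure_cut_meet_subsingleton HM). intros I I' HI HI'. now apply Hbelow.
Qed.
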